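(* Let $T$ and $A$ be closed Hermitian subspaces in $X^2$ and $S$ a self-adjoint subspace in $X^2$, with $D(T)=D(S)=:D\subset D(A)$ and $T=S+A$, and assume $\rho(T)\cap\rho(S)\neq\emptyset$. Let $Q:A(0)^\perp\to S(0)^\perp$ be the orthogonal projection. Then $QA_s$ restricted to $D$ is a finite rank operator if and only if $T$ is a finite rank perturbation of $S$.
   Context: $X$ is a complex Hilbert space and $X^2=X\times X$ carries the inner product $\langle (x,f),(y,g)\rangle=\langle x,y\rangle+\langle f,g\rangle$. A subspace $T$ in $X^2$ means a linear subspace of $X^2$ (a linear relation); a linear operator in $X$ is identified with its graph. Notation: $D(T)=\{x:(x,f)\in T \text{ for some } f\}$, $T(x)=\{f:(x,f)\in T\}$, $T^{-1}=\{(f,x):(x,f)\in T\}$, $\lambda I$ is the graph of $x\mapsto \lambda x$. The adjoint is $T^*=\{(y,g)\in X^2:\langle g,x\rangle=\langle y,f\rangle \text{ for all }(x,f)\in T\}$; $T$ is Hermitian if $T\subset T^*$ and self-adjoint if $T=T^*$. For subspaces $S,A$ in $X^2$, $S+A=\{(x,f+g):(x,f)\in S,(x,g)\in A\}$. For a closed subspace $T$, set $T_\infty=\{(0,g)\in X^2:(0,g)\in T\}$ and $T_s=T\ominus T_\infty$ (orthogonal complement of $T_\infty$ in $T$), so $T=T_s\oplus T_\infty$; $T_s$ is the graph of a linear operator (the operator part of $T$) with $D(T_s)=D(T)$ and $R(T_s)\subset T(0)^\perp$. Resolvent set: $\rho(T)=\{\lambda\in\mathbb C:(\lambda I-T)^{-1}$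 is a bounded linear operator defined on all of $X\}$. Finite rank perturbation: for closed subspaces $T,S$ in $X^2$ with orthogonal projections $P_T,P_S$ of $X^2$ onto $T$, $S$, $T$ is a finite rank perturbation of $S$ if $P_T-P_S$ has finite-dimensional range. *)

From Stdlib Require Import Reals List.
Open Scope R_scope.
Set Implicit Arguments.

Record C : Type := mkC { Re : R ; Im : R }.
Definition C0 : C := mkC 0 0.
Definition C1 : C := mkC 1 0.
Definition Cadd (a b : C) : C := mkC (Re a + Re b) (Im a + Im b).
Definition Cmul (a b : C) : C :=
  mkC (Re a * Re b - Im a * Im b) (Re a * Im b + Im a * Re b).
Definition Cconj (a : C) : C := mkC (Re a) (- Im a).

Record Hilbert : Type := {
  hcar :> Type;
  hzero : hcar;
  hadd : hcar -> hcar -> hcar;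
  hopp : hcar -> hcar;
  hscal : C -> hcar -> hcar;
  hinner : hcar -> hcar -> C;
  hadd_assoc : forall x y z, hadd x (hadd y z) = hadd (hadd x y) z;
  hadd_comm : forall x y, hadd x y = hadd y x;
  hadd_0 : forall x, hadd x hzero = x;
  hadd_opp : forall x, hadd x (hopp x) = hzero;
  hscal_1 : forall x, hscal C1 x = x;
  hscal_mul : forall a b x, hscal (Cmul a b) x = hscal a (hscal b x);
  hscal_addv : forall a x y, hscal a (hadd x y) = hadd (hscal a x) (hscal a y);
  hscal_adds : forall a b x, hscal (Cadd a b) x = hadd (hscal a x) (hscal b x);
  hinner_add : forall x y z, hinner (hadd x y) z = Cadd (hinner x z) (hinner y z);
  hinner_scal : forall a x y, hinner (hscal a x) y = Cmul a (hinner x y);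
  hinner_conj : forall x y, hinner y x = Cconj (hinner x y);
  hinner_im : forall x, Im (hinner x x) = 0;
  hinner_pos : forall x, 0 <= Re (hinner x x);
  hinner_def : forall x, hinner x x = C0 -> x = hzero;
  hcomplete : forall u : nat -> hcar,
    (forall eps, 0 < eps -> exists N, forall m n, (N <= m)%nat -> (N <= n)%nat ->
        sqrt (Re (hinner (hadd (u m) (hopp (u n))) (hadd (u m) (hopp (u n))))) < eps) ->
    exists l, forall eps, 0 < eps -> exists N, forall n, (N <= n)%nat ->
        sqrt (Re (hinner (hadd (u n) (hopp l)) (hadd (u n) (hopp l)))) < eps
}.

Section LinRel.
Variable X : Hilbert.

Definition hsub (x y : X) : X := hadd X x (hopp X y).
Definition hnorm (x : X) : R := sqrt (Re (hinner X x x)).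

Definition X2 := (hcar X * hcar X)%type.
Definition zero2 : X2 := (hzero X, hzero X).
Definition add2 (u v : X2) : X2 := (hadd X (fst u) (fst v), hadd X (snd u) (snd v)).
Definition sub2 (u v : X2) : X2 := (hsub (fst u) (fst v), hsub (snd u) (snd v)).
Definition scal2 (c : C) (u : X2) : X2 := (hscal X c (fst u), hscal X c (snd u)).
Definition inner2 (u v : X2) : C := Cadd (hinner X (fst u) (fst v)) (hinner X (snd u) (snd v)).
Definition norm2 (u : X2) : R := sqrt (Re (inner2 u u)).

Definition subspace2 (T : X2 -> Prop) : Prop :=
  T zero2 /\ (forall u v, T u -> T v -> T (add2 u v)) /\
  (forall c u, T u -> T (scal2 c u)).

Definition conv2 (u : nat -> X2) (l : X2) : Prop :=
  forall eps, 0 < eps -> exists N, forall n, (N <= n)%nat -> norm2 (sub2 (u n) l) < eps.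

Definition closed_subspace2 (T : X2 -> Prop) : Prop :=
  subspace2 T /\
  (forall (u : nat -> X2) (l : X2), (forall n, T (u n)) -> conv2 u l -> T l).

Definition dom (T : X2 -> Prop) (x : X) : Prop := exists f, T (x, f).
Definition image_at (T : X2 -> Prop) (x : X) (f : X) : Prop := T (x, f).

Definition adjoint (T : X2 -> Prop) (w : X2) : Prop :=
  forall x f, T (x, f) -> hinner X (snd w) x = hinner X (fst w) f.
Definition hermitian (T : X2 -> Prop) : Prop := forall w, T w -> adjoint T w.
Definition selfadjoint (T : X2 -> Prop) : Prop := forall w, T w <-> adjoint T w.

Definition rel_sum (S A : X2 -> Prop) (w : X2) : Prop :=
  exists f g, S (fst w, f) /\ A (fst w, g) /\ snd w = hadd X f g.

Definition rel_inf (T : X2 -> Prop) (w : X2) : Prop := fst w = hzero X /\ T w.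
Definition rel_s (T : X2 -> Prop) (w : X2) : Prop :=
  T w /\ forall v, rel_inf T v -> inner2 w v = C0.

(* resolvent set: (lambda I - T)^{-1} is a bounded linear operator on all of X.
   (lambda I - T)^{-1} = {(lambda x - f, x) : (x,f) in T}. *)
Definition resolvent_rel (T : X2 -> Prop) (lam : C) (w : X2) : Prop :=
  exists f, T (snd w, f) /\ fst w = hsub (hscal X lam (snd w)) f.
Definition in_resolvent (T : X2 -> Prop) (lam : C) : Prop :=
  (forall y, exists x, resolvent_rel T lam (y, x)) /\
  (forall y x1 x2, resolvent_rel T lam (y, x1) -> resolvent_rel T lam (y, x2) -> x1 = x2) /\
  (exists M, forall y x, resolvent_rel T lam (y, x) -> hnorm x <= M * hnorm y).

Definition perp (M : X -> Prop) (x : X) : Prop := forall m, M m -> hinner X x m = C0.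
Definition is_proj (M : X -> Prop) (y z : X) : Prop :=
  M z /\ forall m, M m -> hinner X (hsub y z) m = C0.
Definition is_proj2 (T : X2 -> Prop) (w q : X2) : Prop :=
  T q /\ forall v, T v -> inner2 (sub2 w q) v = C0.

Fixpoint lincomb (cs : list C) (vs : list X) : X :=
  match cs, vs with
  | c :: cs', v :: vs' => hadd X (hscal X c v) (lincomb cs' vs')
  | _, _ => hzero X
  end.
Fixpoint lincomb2 (cs : list C) (vs : list X2) : X2 :=
  match cs, vs with
  | c :: cs', v :: vs' => add2 (scal2 c v) (lincomb2 cs' vs')
  | _, _ => zero2
  end.
Definition finite_dim (P : X -> Prop) : Prop :=
  exists vs : list X, forall z, P z -> exists cs : list C, z = lincomb cs vs.
Definition finite_dim2 (P : X2 -> Prop) : Prop :=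
  exists vs : list X2, forall z, P z -> exists cs : list C, z = lincomb2 cs vs.

Definition finite_rank_perturbation (T S : X2 -> Prop) : Prop :=
  finite_dim2 (fun z => exists w p q, is_proj2 T w p /\ is_proj2 S w q /\ z = sub2 p q).

Definition QAs_range (A S : X2 -> Prop) (D : X -> Prop) (z : X) : Prop :=
  exists x f, D x /\ rel_s A (x, f) /\ perp (image_at A (hzero X)) f /\
              is_proj (perp (image_at S (hzero X))) f z.

End LinRel.

From Stdlib Require Import Reals List Lra Psatz Classical ClassicalEpsilon.
Open Scope R_scope.

(* Since A(0) is contained in S(0) = D^perp, every (x, a) in A with x in D splits as
   a = Q f + m with (x, f) in A_s and m in S(0).  Hence, over each x, the fibres of T and S
   differ by elements of R = range(Q A_s restricted to D): T(x) is in S(x) + R and S(x) is in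
   T(x) - R.

   If R is spanned by r_1, ..., r_n, then P_T w - P_S w is a linear function of the 2n numbers
   <w - P_T w, (0, r_i)>, <w - P_S w, (0, r_i)>: when they vanish, w - P_T w and w - P_S w are
   orthogonal to both T and S, hence so is P_T w - P_S w, which is therefore 0.  Conversely, for
   z = Q f in R the vector t = (x, s + z) lies in T, and z depends linearly on the value
   t - P_S t of P_T - P_S.  Both directions are instances of: a linear relation that vanishes on
   the common kernel of finitely many functionals has finite-dimensional range. *)

Lemma Ceq (a b : C) : Re a = Re b -> Im a = Im b -> a = b.
Proof. destruct a, b; simpl; intros; subst; reflexivity. Qed.

Definition Copp (a : C) : C := mkC (- Re a) (- Im a).
Definition Cm1 : C := mkC (-1) 0.
Definition Cinv (b : C) : C :=
  mkC (Re b / (Re b * Re b + Im b * Im b)) (- Im b / (Re b * Re b + Im b * Im b)).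

Ltac Csolve := apply Ceq; unfold Cmul, Cadd, Cconj, Copp, Cinv, C0, C1, Cm1 in *; simpl;
  first [ring | field | lra | nra].

Lemma Cadd_opp_div_mul (x b : C) : b <> C0 -> Cadd x (Cmul (Copp (Cmul x (Cinv b))) b) = C0.
Proof.
  destruct b as [br bi]; intros Hb.
  assert (br * br + bi * bi <> 0).
  { intro E. apply Hb. assert (br = 0) by nra. assert (bi = 0) by nra. subst. reflexivity. }
  apply Ceq; simpl; field; auto.
Qed.

Lemma sq_le_all_pos_eq0 (r N : R) :
  0 <= N -> (forall d, 0 < d -> r * r <= d * N) -> r = 0.
Proof.
  intros HN Hd. destruct (Req_dec r 0) as [|Hr]; auto.
  assert (Hrr : 0 < r * r) by nra.
  specialize (Hd (r * r / (2 * (N + 1)))).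
  assert (0 < r * r / (2 * (N + 1))) by (apply Rdiv_lt_0_compat; lra).
  assert (r * r / (2 * (N + 1)) * N < r * r).
  { apply (Rmult_lt_reg_r (2 * (N + 1))); [lra|].
    replace (r * r / (2 * (N + 1)) * N * (2 * (N + 1))) with (r * r * N) by (field; lra). nra. }
  specialize (Hd ltac:(assumption)). lra.
Qed.

Lemma quad_nonneg_eq0 (N a : R) :
  0 <= N -> (forall t, 0 <= t * t * N + 2 * t * a) -> a = 0.
Proof.
  intros HN Ht. specialize (Ht (- a / (N + 1))).
  assert (E : (N + 1) * (N + 1) * (- a / (N + 1) * (- a / (N + 1)) * N + 2 * (- a / (N + 1)) * a)
              = - (a * a) * (N + 2)) by (field; lra).
  assert (0 <= (N + 1) * (N + 1) * (- a / (N + 1) * (- a / (N + 1)) * N + 2 * (- a / (N + 1)) * a))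
    by (apply Rmult_le_pos; nra).
  nra.
Qed.

Lemma inv_INR_succ_small (eps : R) :
  0 < eps -> exists N, forall n, (N <= n)%nat -> / (INR n + 1) < eps.
Proof.
  intros He. destruct (INR_unbounded (/ eps)) as [N HN]. exists N. intros n Hn.
  apply le_INR in Hn. pose proof (pos_INR N).
  rewrite <- (Rinv_inv eps). apply Rinv_lt_contravar; [|lra].
  apply Rmult_lt_0_compat; [apply Rinv_0_lt_compat|]; lra.
Qed.

Lemma inv_INR_succ_pos (n : nat) : 0 < / (INR n + 1).
Proof. pose proof (pos_INR n). apply Rinv_0_lt_compat. lra. Qed.

Lemma sqrt_add_sq_le (a b : R) : 0 <= a -> 0 <= b -> sqrt (a + b * b) <= sqrt a + b.
Proof.
  intros Ha Hb. pose proof (sqrt_pos a). pose proof (sqrt_sqrt a Ha).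
  rewrite <- (sqrt_square (sqrt a + b)) by lra. apply sqrt_le_1_alt. nra.
Qed.

Lemma sqrt_add_lt (a b e : R) :
  0 <= a -> 0 <= b -> sqrt a < e / 2 -> sqrt b < e / 2 -> sqrt (a + b) < e.
Proof.
  intros Ha Hb Hsa Hsb.
  pose proof (sqrt_sqrt a Ha). pose proof (sqrt_sqrt b Hb).
  pose proof (sqrt_pos a). pose proof (sqrt_pos b).
  rewrite <- (sqrt_square e) by lra. apply sqrt_lt_1_alt. split; nra.
Qed.

Section VectorSpace.
Variable H : Hilbert.

Lemma hadd_0l (x : H) : hadd H (hzero H) x = x.
Proof. rewrite hadd_comm; apply hadd_0. Qed.

Lemma hadd_idem_0 (y : H) : hadd H y y = y -> y = hzero H.
Proof.
  intros E. rewrite <- (hadd_opp H y). rewrite <- E at 2.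
  rewrite <- hadd_assoc, hadd_opp, hadd_0. reflexivity.
Qed.

Lemma hscal_C0 (x : H) : hscal H C0 x = hzero H.
Proof. apply hadd_idem_0. rewrite <- hscal_adds. f_equal. Csolve. Qed.

Lemma hscal_zero (a : C) : hscal H a (hzero H) = hzero H.
Proof. apply hadd_idem_0. rewrite <- hscal_addv, hadd_0. reflexivity. Qed.

Lemma hadd_inv_unique (x a b : H) :
  hadd H a x = hzero H -> hadd H x b = hzero H -> a = b.
Proof.
  intros Ha Hb. rewrite <- (hadd_0 H a), <- Hb, hadd_assoc, Ha, hadd_0l. reflexivity.
Qed.

Lemma hopp_scal (x : H) : hopp H x = hscal H Cm1 x.
Proof.
  symmetry. apply (hadd_inv_unique x).
  - rewrite <- (hscal_1 H x) at 2. rewrite <- hscal_adds.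
    replace (Cadd Cm1 C1) with C0 by Csolve. apply hscal_C0.
  - apply hadd_opp.
Qed.
End VectorSpace.

(* Identities between linear combinations are decided by comparing, atom by atom, the
   coefficients of both sides. *)
Section ModuleReflection.
Variable H : Hilbert.

Inductive vexp :=
  VAtom (n : nat) | VZero | VAdd (a b : vexp) | VOpp (a : vexp) | VScal (c : C) (a : vexp).

Fixpoint veval (env : list H) (e : vexp) : H :=
  match e with
  | VAtom n => nth n env (hzero H)
  | VZero => hzero H
  | VAdd a b => hadd H (veval env a) (veval env b)
  | VOpp a => hopp H (veval env a)
  | VScal c a => hscal H c (veval env a)
  end.

Fixpoint vcoef (e : vexp) (i : nat) : C :=
  match e with
  | VAtom n => if Nat.eqb n i then C1 else C0
  | VZero => C0
  | VAdd a b => Cadd (vcoef a i) (vcoef b i)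
  | VOpp a => Cmul Cm1 (vcoef a i)
  | VScal c a => Cmul c (vcoef a i)
  end.

Fixpoint vsum (env : list H) (f : nat -> C) (k : nat) : H :=
  match k with
  | O => hzero H
  | S k' => hadd H (vsum env f k') (hscal H (f k') (nth k' env (hzero H)))
  end.

Lemma hadd_add4 (a b c d : H) :
  hadd H (hadd H a b) (hadd H c d) = hadd H (hadd H a c) (hadd H b d).
Proof.
  rewrite <- !hadd_assoc. f_equal. rewrite !hadd_assoc. f_equal. apply hadd_comm.
Qed.

Lemma vsum_ext env f g k :
  (forall i, (i < k)%nat -> f i = g i) -> vsum env f k = vsum env g k.
Proof.
  induction k; intros E; simpl; auto.
  rewrite IHk by (intros; apply E; lia). rewrite E by lia. reflexivity.
Qed.

Lemma vsum_add env f g k :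
  vsum env (fun i => Cadd (f i) (g i)) k = hadd H (vsum env f k) (vsum env g k).
Proof.
  induction k; simpl. { rewrite hadd_0; reflexivity. }
  rewrite IHk, hscal_adds, hadd_add4. reflexivity.
Qed.

Lemma vsum_scal env c f k :
  vsum env (fun i => Cmul c (f i)) k = hscal H c (vsum env f k).
Proof.
  induction k; simpl. { rewrite hscal_zero; reflexivity. }
  rewrite IHk, hscal_addv, hscal_mul. reflexivity.
Qed.

Lemma vsum_atom env n k :
  vsum env (fun i => if Nat.eqb n i then C1 else C0) k =
  if Nat.ltb n k then nth n env (hzero H) else hzero H.
Proof.
  induction k; simpl. { destruct n; reflexivity. }
  rewrite IHk. destruct (Nat.eqb_spec n k) as [->|Ne].
  - rewrite Nat.ltb_irrefl, hscal_1, hadd_0l.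
    replace (Nat.ltb k (S k)) with true by (symmetry; apply Nat.ltb_lt; lia). reflexivity.
  - rewrite hscal_C0, hadd_0.
    destruct (Nat.ltb_spec n k); destruct (Nat.ltb_spec n (S k)); auto; lia.
Qed.

Lemma veval_vsum env e : veval env e = vsum env (vcoef e) (length env).
Proof.
  induction e; simpl.
  - rewrite vsum_atom. destruct (Nat.ltb_spec n (length env)); auto.
    rewrite nth_overflow; auto.
  - rewrite (vsum_ext env _ (fun i => Cmul C0 C0)) by (intros; Csolve).
    rewrite vsum_scal, hscal_C0. reflexivity.
  - rewrite vsum_add, IHe1, IHe2. reflexivity.
  - rewrite vsum_scal, IHe, hopp_scal. reflexivity.
  - rewrite vsum_scal, IHe. reflexivity.
Qed.

Fixpoint same_coefs (e1 e2 : vexp) (k : nat) : Prop :=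
  match k with
  | O => True
  | S k' => vcoef e1 k' = vcoef e2 k' /\ same_coefs e1 e2 k'
  end.

Lemma veval_eq env e1 e2 :
  same_coefs e1 e2 (length env) -> veval env e1 = veval env e2.
Proof.
  intros Hs. rewrite !veval_vsum. apply vsum_ext.
  induction (length env) as [|k IH]; simpl in *; intros i Hi; [lia|].
  destruct Hs as [Hk Hs]. destruct (Nat.eq_dec i k); subst; auto. apply IH; auto; lia.
Qed.

End ModuleReflection.

Ltac vmem x l :=
  match l with nil => constr:(false) | cons x _ => constr:(true) | cons _ ?r => vmem x r end.

Ltac vatoms t l :=
  match t with
  | hadd _ ?a ?b => let l1 := vatoms a l in vatoms b l1
  | @add2 _ ?a ?b => let l1 := vatoms a l in vatoms b l1
  | @hsub _ ?a ?b => let l1 := vatoms a l in vatoms b l1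
  | @sub2 _ ?a ?b => let l1 := vatoms a l in vatoms b l1
  | hopp _ ?a => vatoms a l
  | hscal _ _ ?a => vatoms a l
  | @scal2 _ _ ?a => vatoms a l
  | hzero _ => l
  | @zero2 _ => l
  | _ => let b := vmem t l in
         match b with
         | true => l
         | false => let l' := eval simpl in (app l (cons t nil)) in l'
         end
  end.

Ltac vindex x l n :=
  match l with cons x _ => constr:(n) | cons _ ?r => vindex x r (S n) end.

Ltac vreify t l :=
  match t with
  | hadd _ ?a ?b => let x := vreify a l in let y := vreify b l in constr:(VAdd x y)
  | @add2 _ ?a ?b => let x := vreify a l in let y := vreify b l in constr:(VAdd x y)
  | @hsub _ ?a ?b => let x := vreify a l in let y := vreify b l in constr:(VAdd x (VOpp y))
  | @sub2 _ ?a ?b => let x := vreify a l in let y := vreify b l in constr:(VAdd x (VOpp y))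
  | hopp _ ?a => let x := vreify a l in constr:(VOpp x)
  | hscal _ ?c ?a => let x := vreify a l in constr:(VScal c x)
  | @scal2 _ ?c ?a => let x := vreify a l in constr:(VScal c x)
  | hzero _ => constr:(VZero)
  | @zero2 _ => constr:(VZero)
  | _ => let n := vindex t l 0%nat in constr:(VAtom n)
  end.

(* The operations of [X2] are recognised too, as those of the Hilbert space [X2h X]. *)
Ltac hmodule Y :=
  match goal with |- ?a = ?b =>
    let l := vatoms a (@nil (hcar Y)) in
    let l := vatoms b l in
    let e1 := vreify a l in let e2 := vreify b l in
    change (veval Y l e1 = veval Y l e2); apply veval_eq; simpl;
    repeat split; Csolve
  end.

Section InnerProduct.
Variable H : Hilbert.

Lemma inner_0l (y : H) : hinner H (hzero H) y = C0.
Proof. rewrite <- (hscal_C0 H y), hinner_scal. Csolve. Qed.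

Lemma inner_0r (y : H) : hinner H y (hzero H) = C0.
Proof. rewrite hinner_conj, inner_0l. Csolve. Qed.

Lemma inner_addr (x y z : H) :
  hinner H x (hadd H y z) = Cadd (hinner H x y) (hinner H x z).
Proof.
  rewrite (hinner_conj H (hadd H y z) x), hinner_add, (hinner_conj H y x), (hinner_conj H z x).
  Csolve.
Qed.

Lemma inner_scalr (a : C) (x y : H) :
  hinner H x (hscal H a y) = Cmul (Cconj a) (hinner H x y).
Proof. rewrite (hinner_conj H (hscal H a y) x), hinner_scal, (hinner_conj H y x). Csolve. Qed.

Lemma inner_oppr (x y : H) : hinner H x (hopp H y) = Cmul Cm1 (hinner H x y).
Proof. rewrite hopp_scal, inner_scalr. Csolve. Qed.

Lemma inner_subl (a b y : H) :
  hinner H (hsub H a b) y = Cadd (hinner H a y) (Cmul Cm1 (hinner H b y)).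
Proof. unfold hsub. rewrite hinner_add, hopp_scal, hinner_scal. reflexivity. Qed.

Lemma inner_subr (a b y : H) :
  hinner H y (hsub H a b) = Cadd (hinner H y a) (Cmul Cm1 (hinner H y b)).
Proof. unfold hsub. rewrite inner_addr, inner_oppr. reflexivity. Qed.

Lemma inner_lincomb0 (u : H) cs vs :
  (forall v, In v vs -> hinner H u v = C0) -> hinner H u (lincomb H cs vs) = C0.
Proof.
  revert vs; induction cs as [|c cs IH]; intros [|v vs] Hv; simpl; try apply inner_0r.
  rewrite inner_addr, inner_scalr, Hv, IH;
    [Csolve | intros w Hw; apply Hv; simpl; auto | simpl; auto].
Qed.

Lemma hsub_eq0 (a b : H) : hsub H a b = hzero H -> a = b.
Proof.
  intros E. transitivity (hadd H (hsub H a b) b); [hmodule H|]. rewrite E. apply hadd_0l.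
Qed.

Definition nsq (u : H) : R := Re (hinner H u u).

Lemma nsq_ge0 (u : H) : 0 <= nsq u.
Proof. apply hinner_pos. Qed.

Lemma nsq_eq0 (u : H) : nsq u = 0 -> u = hzero H.
Proof. intros E. apply hinner_def, Ceq; [exact E | apply hinner_im]. Qed.

Lemma nsq_add (u v : H) : nsq (hadd H u v) = nsq u + nsq v + 2 * Re (hinner H u v).
Proof.
  unfold nsq. rewrite hinner_add, !inner_addr, (hinner_conj H v u). simpl. ring.
Qed.

Lemma nsq_scal (a : C) (u : H) : nsq (hscal H a u) = (Re a * Re a + Im a * Im a) * nsq u.
Proof. unfold nsq. rewrite hinner_scal, inner_scalr. simpl. rewrite hinner_im. ring. Qed.

Lemma nsq_sub_sym (a b : H) : nsq (hsub H a b) = nsq (hsub H b a).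
Proof.
  replace (hsub H a b) with (hscal H Cm1 (hsub H b a)) by hmodule H.
  rewrite nsq_scal. simpl. ring.
Qed.

Lemma Re_inner_sq_le (u v : H) : Re (hinner H u v) * Re (hinner H u v) <= nsq u * nsq v.
Proof.
  pose proof (nsq_ge0 u). pose proof (nsq_ge0 v).
  set (r := Re (hinner H u v)).
  assert (Ht : forall t, 0 <= t * t * nsq v + 2 * t * r + nsq u).
  { intros t. pose proof (nsq_ge0 (hadd H u (hscal H (mkC t 0) v))) as P.
    rewrite nsq_add, nsq_scal, inner_scalr in P. simpl in P. fold r in P. nra. }
  destruct (Req_dec (nsq v) 0) as [E|E].
  - assert (r = 0) as ->.
    { unfold r. rewrite (nsq_eq0 v E), inner_0r. reflexivity. }
    nra.
  - specialize (Ht (- r / nsq v)).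
    replace (- r / nsq v * (- r / nsq v) * nsq v + 2 * (- r / nsq v) * r + nsq u)
      with ((nsq u * nsq v - r * r) / nsq v) in Ht by (field; auto).
    assert (0 < nsq v) by lra.
    apply (Rmult_le_compat_r (nsq v)) in Ht; [|lra].
    replace ((nsq u * nsq v - r * r) / nsq v * nsq v) with (nsq u * nsq v - r * r) in Ht
      by (field; auto). lra.
Qed.

Lemma Im_inner_as_Re (u v : H) : Im (hinner H u v) = Re (hinner H (hscal H (mkC 0 (-1)) u) v).
Proof. rewrite hinner_scal. simpl. ring. Qed.

Lemma hnorm_add_le (u v : H) : hnorm H (hadd H u v) <= hnorm H u + hnorm H v.
Proof.
  unfold hnorm. fold (nsq (hadd H u v)) (nsq u) (nsq v).
  pose proof (nsq_ge0 u). pose proof (nsq_ge0 v).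
  pose proof (sqrt_pos (nsq u)). pose proof (sqrt_pos (nsq v)).
  pose proof (sqrt_sqrt _ (nsq_ge0 u)). pose proof (sqrt_sqrt _ (nsq_ge0 v)).
  assert (Hr : Re (hinner H u v) <= sqrt (nsq u) * sqrt (nsq v)).
  { pose proof (Re_inner_sq_le u v). apply Rnot_lt_le. intros Hlt.
    assert (sqrt (nsq u) * sqrt (nsq v) * (sqrt (nsq u) * sqrt (nsq v))
            < Re (hinner H u v) * Re (hinner H u v)) by (apply Rmult_le_0_lt_compat; nra).
    nra. }
  rewrite <- (sqrt_square (sqrt (nsq u) + sqrt (nsq v))) by lra.
  apply sqrt_le_1_alt. rewrite nsq_add. nra.
Qed.

Definition hconv (u : nat -> H) (l : H) : Prop :=
  forall eps, 0 < eps -> exists N, forall n, (N <= n)%nat -> hnorm H (hsub H (u n) l) < eps.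
Definition hsubsp (M : H -> Prop) : Prop :=
  M (hzero H) /\ (forall u v, M u -> M v -> M (hadd H u v)) /\
  (forall c u, M u -> M (hscal H c u)).
Definition hclosed (M : H -> Prop) : Prop :=
  forall u l, (forall n, M (u n)) -> hconv u l -> M l.

Lemma hsubsp_comb (M : H -> Prop) u v a :
  hsubsp M -> M u -> M v -> M (hadd H u (hscal H a v)).
Proof. intros (_ & Ha & Hs) Mu Mv. auto. Qed.

Lemma perp_hsubsp (M : H -> Prop) : hsubsp (perp H M).
Proof.
  split; [|split]; intros; intros m Hm.
  - apply inner_0l.
  - rewrite hinner_add, H0, H1 by auto. Csolve.
  - rewrite hinner_scal, H0 by auto. Csolve.
Qed.

Lemma perp_hclosed (M : H -> Prop) : hclosed (perp H M).
Proof.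
  intros u l Hu Hc m Hm.
  assert (Hsmall : forall d, 0 < d -> exists n, nsq (hsub H l (u n)) < d).
  { intros d Hd. destruct (Hc (sqrt d) (sqrt_lt_R0 d Hd)) as [N HN]. exists N.
    rewrite nsq_sub_sym. apply sqrt_lt_0_alt, HN. lia. }
  assert (Hshift : forall n, hinner H (hsub H l (u n)) m = hinner H l m).
  { intros n. rewrite inner_subl, (Hu n m Hm). Csolve. }
  pose proof (nsq_ge0 m).
  apply Ceq; apply (sq_le_all_pos_eq0 _ (nsq m)); auto; intros d Hd;
    destruct (Hsmall d Hd) as [n Hn]; simpl.
  - pose proof (Re_inner_sq_le (hsub H l (u n)) m). rewrite Hshift in H1. nra.
  - pose proof (Re_inner_sq_le (hscal H (mkC 0 (-1)) (hsub H l (u n))) m).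
    rewrite nsq_scal, <- Im_inner_as_Re, Hshift in H1. simpl in H1. nra.
Qed.

Lemma inner_eq0_of_min (e m : H) :
  (forall t, nsq e <= nsq (hadd H e (hscal H t m))) -> hinner H e m = C0.
Proof.
  intros Ht. pose proof (nsq_ge0 m).
  apply Ceq; simpl; apply (quad_nonneg_eq0 (nsq m)); auto; intros t.
  - specialize (Ht (mkC t 0)). rewrite nsq_add, nsq_scal, inner_scalr in Ht. simpl in Ht. lra.
  - specialize (Ht (mkC 0 t)). rewrite nsq_add, nsq_scal, inner_scalr in Ht. simpl in Ht. lra.
Qed.

End InnerProduct.

Section Projection.
Variable H : Hilbert.
Variable M : H -> Prop.
Hypothesis M_sub : hsubsp H M.
Hypothesis M_closed : hclosed H M.
Variable y : H.

Lemma exists_inf_dist : exists d, 0 <= d /\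
  (forall m, M m -> d <= nsq H (hsub H y m)) /\
  (forall eps, 0 < eps -> exists m, M m /\ nsq H (hsub H y m) < d + eps).
Proof.
  set (E := fun r => exists m, M m /\ r = - nsq H (hsub H y m)).
  assert (Hb : bound E).
  { exists 0. intros r [m [_ ->]]. pose proof (nsq_ge0 H (hsub H y m)). lra. }
  assert (He : exists r, E r) by (exists (- nsq H (hsub H y (hzero H))), (hzero H); split;
    [apply M_sub | reflexivity]).
  destruct (completeness E Hb He) as [L [Lub1 Lub2]].
  exists (- L). split; [|split].
  - enough (L <= 0) by lra. apply Lub2. intros r [m [_ ->]].
    pose proof (nsq_ge0 H (hsub H y m)). lra.
  - intros m Hm. assert (E (- nsq H (hsub H y m))) by (exists m; auto).
    specialize (Lub1 _ H0). lra.
  - intros eps Heps. apply NNPP. intros Hn.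
    assert (L <= L - eps); [|lra].
    apply Lub2. intros r [m [Hm ->]]. apply Rnot_lt_le. intros Hlt.
    apply Hn. exists m. split; auto. lra.
Qed.

(* Parallelogram law for [y - m1] and [y - m2], whose half-sum is [y - (m1 + m2)/2]. *)
Lemma nsq_sub_le_of_near_inf (d : R) (m1 m2 : H) :
  (forall m, M m -> d <= nsq H (hsub H y m)) -> M m1 -> M m2 ->
  nsq H (hsub H m1 m2) <= 2 * (nsq H (hsub H y m1) - d) + 2 * (nsq H (hsub H y m2) - d).
Proof.
  intros Hlow M1 M2.
  set (a := hsub H y m1). set (b := hsub H y m2).
  set (mid := hscal H (mkC (1/2) 0) (hadd H m1 m2)).
  assert (Mmid : M mid) by (destruct M_sub as (_ & Ha & Hs); unfold mid; auto).
  assert (I1 : hsub H m1 m2 = hadd H b (hscal H Cm1 a)) by (unfold a, b; hmodule H).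
  assert (I2 : hadd H a b = hscal H (mkC 2 0) (hsub H y mid)) by (unfold a, b, mid; hmodule H).
  pose proof (nsq_add H b (hscal H Cm1 a)) as N1. rewrite nsq_scal, inner_scalr, <- I1 in N1.
  pose proof (nsq_add H a b) as N2. rewrite I2, nsq_scal in N2.
  rewrite (hinner_conj H a b) in N1. simpl in N1, N2.
  pose proof (Hlow mid Mmid). lra.
Qed.

Section MinimizingSequence.
Variable d : R.
Hypothesis d_ge0 : 0 <= d.
Hypothesis d_low : forall m, M m -> d <= nsq H (hsub H y m).
Variable ms : nat -> H.
Hypothesis ms_in : forall n, M (ms n).
Hypothesis ms_near : forall n, nsq H (hsub H y (ms n)) < d + / (INR n + 1) * / (INR n + 1).

Lemma minimizing_seq_cauchy : forall eps, 0 < eps -> exists N, forall m n,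
  (N <= m)%nat -> (N <= n)%nat -> hnorm H (hsub H (ms m) (ms n)) < eps.
Proof.
  intros eps Heps. destruct (inv_INR_succ_small (eps / 2)) as [N HN]; [lra|].
  exists N. intros m n Hm Hn.
  pose proof (nsq_sub_le_of_near_inf d _ _ d_low (ms_in m) (ms_in n)).
  pose proof (ms_near m). pose proof (ms_near n). pose proof (HN m Hm). pose proof (HN n Hn).
  pose proof (inv_INR_succ_pos m). pose proof (inv_INR_succ_pos n).
  unfold hnorm. fold (nsq H (hsub H (ms m) (ms n))).
  rewrite <- (sqrt_square eps) by lra. apply sqrt_lt_1_alt. split; [apply nsq_ge0 | nra].
Qed.

Lemma minimizing_seq_limit (l : H) : hconv H ms l -> nsq H (hsub H y l) <= d.
Proof.
  intros Hl. apply sqrt_le_0; [apply nsq_ge0 | exact d_ge0 |].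
  change (hnorm H (hsub H y l) <= sqrt d).
  apply Rnot_lt_le. intros Hlt. set (g := hnorm H (hsub H y l) - sqrt d).
  destruct (inv_INR_succ_small (g / 2)) as [N1 HN1]; [unfold g; lra|].
  destruct (Hl (g / 2)) as [N2 HN2]; [unfold g; lra|].
  set (n := Nat.max N1 N2).
  specialize (HN1 n (Nat.le_max_l _ _)). specialize (HN2 n (Nat.le_max_r _ _)).
  pose proof (hnorm_add_le H (hsub H y (ms n)) (hsub H (ms n) l)) as Htri.
  replace (hadd H (hsub H y (ms n)) (hsub H (ms n) l)) with (hsub H y l) in Htri
    by hmodule H.
  assert (hnorm H (hsub H y (ms n)) <= sqrt d + / (INR n + 1)).
  { eapply Rle_trans; [|apply sqrt_add_sq_le; [lra | left; apply inv_INR_succ_pos]].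
    apply sqrt_le_1_alt. left. apply ms_near. }
  unfold g in *. lra.
Qed.

End MinimizingSequence.

Lemma exists_minimizer : exists l, M l /\ forall m, M m -> nsq H (hsub H y l) <= nsq H (hsub H y m).
Proof.
  destruct exists_inf_dist as [d [Hd [Hlow Happrox]]].
  assert (Hseq : forall n : nat,
      {m | M m /\ nsq H (hsub H y m) < d + / (INR n + 1) * / (INR n + 1)}).
  { intros n. apply constructive_indefinite_description, Happrox.
    pose proof (inv_INR_succ_pos n). nra. }
  set (ms := fun n => proj1_sig (Hseq n)).
  assert (HmsM : forall n, M (ms n)) by (intro n; exact (proj1 (proj2_sig (Hseq n)))).
  assert (Hmsd : forall n, nsq H (hsub H y (ms n)) < d + / (INR n + 1) * / (INR n + 1))
    by (intro n; exact (proj2 (proj2_sig (Hseq n)))).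
  destruct (hcomplete H ms (minimizing_seq_cauchy d Hlow ms HmsM Hmsd)) as [l Hl].
  exists l. split; [exact (M_closed ms l HmsM Hl)|].
  intros m Hm. pose proof (minimizing_seq_limit d Hd ms Hmsd l Hl). pose proof (Hlow m Hm). lra.
Qed.

Theorem proj_exists : exists z, is_proj H M y z.
Proof.
  destruct exists_minimizer as [l [Ml Hmin]].
  exists l. split; auto.
  intros m Hm. apply inner_eq0_of_min. intros t.
  replace (hadd H (hsub H y l) (hscal H t m)) with (hsub H y (hadd H l (hscal H (Copp t) m)))
    by hmodule H.
  apply Hmin, (hsubsp_comb H M l m (Copp t) M_sub Ml Hm).
Qed.
End Projection.

Section ProductSpace.
Variable X : Hilbert.

Definition opp2 (u : X2 X) : X2 X := (hopp X (fst u), hopp X (snd u)).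

Lemma add2_assoc (x y z : X2 X) : add2 x (add2 y z) = add2 (add2 x y) z.
Proof. unfold add2; simpl; f_equal; apply hadd_assoc. Qed.
Lemma add2_comm (x y : X2 X) : add2 x y = add2 y x.
Proof. unfold add2; f_equal; apply hadd_comm. Qed.
Lemma add2_0 (x : X2 X) : add2 x (zero2 X) = x.
Proof. destruct x; unfold add2, zero2; simpl; f_equal; apply hadd_0. Qed.
Lemma add2_opp (x : X2 X) : add2 x (opp2 x) = zero2 X.
Proof. unfold add2, opp2, zero2; simpl; f_equal; apply hadd_opp. Qed.
Lemma scal2_1 (x : X2 X) : scal2 C1 x = x.
Proof. destruct x; unfold scal2; simpl; f_equal; apply hscal_1. Qed.
Lemma scal2_mul a b (x : X2 X) : scal2 (Cmul a b) x = scal2 a (scal2 b x).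
Proof. unfold scal2; simpl; f_equal; apply hscal_mul. Qed.
Lemma scal2_addv a (x y : X2 X) : scal2 a (add2 x y) = add2 (scal2 a x) (scal2 a y).
Proof. unfold scal2, add2; simpl; f_equal; apply hscal_addv. Qed.
Lemma scal2_adds a b (x : X2 X) : scal2 (Cadd a b) x = add2 (scal2 a x) (scal2 b x).
Proof. unfold scal2, add2; simpl; f_equal; apply hscal_adds. Qed.
Lemma inner2_add (x y z : X2 X) : inner2 (add2 x y) z = Cadd (inner2 x z) (inner2 y z).
Proof. unfold inner2, add2; simpl. rewrite !hinner_add. Csolve. Qed.
Lemma inner2_scal a (x y : X2 X) : inner2 (scal2 a x) y = Cmul a (inner2 x y).
Proof. unfold inner2, scal2; simpl. rewrite !hinner_scal. Csolve. Qed.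
Lemma inner2_conj (x y : X2 X) : inner2 y x = Cconj (inner2 x y).
Proof. unfold inner2. rewrite (hinner_conj X (fst x)), (hinner_conj X (snd x)). Csolve. Qed.
Lemma inner2_im (x : X2 X) : Im (inner2 x x) = 0.
Proof. unfold inner2; simpl. rewrite !hinner_im. ring. Qed.
Lemma inner2_pos (x : X2 X) : 0 <= Re (inner2 x x).
Proof.
  unfold inner2; simpl. pose proof (hinner_pos X (fst x)). pose proof (hinner_pos X (snd x)). lra.
Qed.
Lemma inner2_def (x : X2 X) : inner2 x x = C0 -> x = zero2 X.
Proof.
  destruct x as [a b]. intros E. apply (f_equal Re) in E. unfold inner2 in E; simpl in E.
  pose proof (nsq_ge0 X a). pose proof (nsq_ge0 X b). unfold nsq in *.
  unfold zero2. f_equal; apply nsq_eq0; unfold nsq; lra.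
Qed.

Lemma nsq_fst_snd_le (u : X2 X) :
  nsq X (fst u) <= Re (inner2 u u) /\ nsq X (snd u) <= Re (inner2 u u).
Proof.
  pose proof (nsq_ge0 X (fst u)). pose proof (nsq_ge0 X (snd u)).
  unfold inner2, nsq in *. simpl. lra.
Qed.

Lemma add2_complete (u : nat -> X2 X) :
  (forall eps, 0 < eps -> exists N, forall m n, (N <= m)%nat -> (N <= n)%nat ->
      sqrt (Re (inner2 (add2 (u m) (opp2 (u n))) (add2 (u m) (opp2 (u n))))) < eps) ->
  exists l, forall eps, 0 < eps -> exists N, forall n, (N <= n)%nat ->
      sqrt (Re (inner2 (add2 (u n) (opp2 l)) (add2 (u n) (opp2 l)))) < eps.
Proof.
  intros Hc.
  destruct (hcomplete X (fun n => fst (u n))) as [l1 L1];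
    [|destruct (hcomplete X (fun n => snd (u n))) as [l2 L2]].
  1, 2: intros eps He; destruct (Hc eps He) as [N HN]; exists N; intros m n Hm Hn;
    eapply Rle_lt_trans; [|apply (HN m n Hm Hn)]; apply sqrt_le_1_alt;
    apply (nsq_fst_snd_le (add2 (u m) (opp2 (u n)))).
  exists (l1, l2). intros eps He.
  destruct (L1 (eps / 2)) as [N1 HN1]; [lra|].
  destruct (L2 (eps / 2)) as [N2 HN2]; [lra|].
  exists (Nat.max N1 N2). intros n Hn.
  apply sqrt_add_lt; try apply nsq_ge0; [apply HN1 | apply HN2]; lia.
Qed.

Definition X2h : Hilbert :=
  {| hcar := X2 X; hzero := zero2 X; hadd := @add2 X; hopp := opp2; hscal := @scal2 X;
     hinner := @inner2 X;
     hadd_assoc := add2_assoc; hadd_comm := add2_comm; hadd_0 := add2_0; hadd_opp := add2_opp;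
     hscal_1 := scal2_1; hscal_mul := scal2_mul; hscal_addv := scal2_addv;
     hscal_adds := scal2_adds; hinner_add := inner2_add; hinner_scal := inner2_scal;
     hinner_conj := inner2_conj; hinner_im := inner2_im; hinner_pos := inner2_pos;
     hinner_def := inner2_def; hcomplete := add2_complete |}.

Lemma lincomb2_X2h cs vs : lincomb2 cs vs = lincomb X2h cs vs.
Proof. revert vs; induction cs; intros [|v vs]; simpl; rewrite ?IHcs; reflexivity. Qed.

End ProductSpace.

Lemma lincomb_perp_eq0 (Y : Hilbert) (z : Y) cs vs :
  z = lincomb Y cs vs -> (forall v, In v vs -> hinner Y z v = C0) -> z = hzero Y.
Proof.
  intros Ez Hv. apply hinner_def. rewrite Ez at 2. apply inner_lincomb0, Hv.
Qed.

Definition linear_rel {V Y : Hilbert} (R : V -> Y -> Prop) : Prop :=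
  forall v y v' y' a, R v y -> R v' y' -> R (hadd V v (hscal V a v')) (hadd Y y (hscal Y a y')).

(* Induction on [es]: if some [(v0, y0) \in R] has [<v0, e> <> 0], every value of [R] is a
   multiple of [y0] plus a value of [R] on the kernel of [<., e>]. *)
Lemma linear_rel_range_finite_dim (V Y : Hilbert) (es : list V) (R : V -> Y -> Prop) :
  linear_rel R ->
  (forall v y, R v y -> (forall e, In e es -> hinner V v e = C0) -> y = hzero Y) ->
  finite_dim Y (fun y => exists v, R v y).
Proof.
  revert R; induction es as [|e es IH]; intros R Hlin Hker.
  - exists nil. intros y [v Rvy]. exists nil. apply (Hker v); simpl; tauto.
  - destruct (classic (exists v0 y0, R v0 y0 /\ hinner V v0 e <> C0))
      as [(v0 & y0 & Rv0 & He0) | Hnone].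
    + destruct (IH (fun v y => R v y /\ hinner V v e = C0)) as [ys Hys].
      * intros v y v' y' a [Rvy Hv] [Rvy' Hv']. split; [apply Hlin; auto|].
        rewrite hinner_add, hinner_scal, Hv, Hv'. Csolve.
      * intros v y [Rvy Hv] Hes. apply (Hker v); auto. intros e' [<-|Ine']; auto.
      * exists (y0 :: ys). intros y [v Rvy].
        set (a := Copp (Cmul (hinner V v e) (Cinv (hinner V v0 e)))).
        destruct (Hys (hadd Y y (hscal Y a y0))) as [cs Hcs].
        { exists (hadd V v (hscal V a v0)). split; [apply Hlin; auto|].
          rewrite hinner_add, hinner_scal. apply Cadd_opp_div_mul, He0. }
        exists (Copp a :: cs). simpl. rewrite <- Hcs. hmodule Y.
    + apply IH; auto. intros v y Rvy Hes. apply (Hker v); auto.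
      intros e' [<-|Ine']; auto. apply NNPP. intros Hne. apply Hnone. eauto.
Qed.

Lemma finite_dim_mono (Y : Hilbert) (P Q : Y -> Prop) :
  finite_dim Y P -> (forall z, Q z -> P z) -> finite_dim Y Q.
Proof. intros [vs Hvs] HQP. exists vs. auto. Qed.

Lemma is_proj_comb (Y : Hilbert) (U : Y -> Prop) w p w' p' a :
  hsubsp Y U -> is_proj Y U w p -> is_proj Y U w' p' ->
  is_proj Y U (hadd Y w (hscal Y a w')) (hadd Y p (hscal Y a p')).
Proof.
  intros HU [Up Op] [Up' Op']. split; [apply hsubsp_comb; auto|].
  intros v Uv.
  replace (hsub Y (hadd Y w (hscal Y a w')) (hadd Y p (hscal Y a p')))
    with (hadd Y (hsub Y w p) (hscal Y a (hsub Y w' p'))) by hmodule Y.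
  rewrite hinner_add, hinner_scal, Op, Op' by auto. Csolve.
Qed.

Section Relations.
Variable X : Hilbert.

Lemma inner2_0_snd (u : X2 X) (z : X) : inner2 u (hzero X, z) = hinner X (snd u) z.
Proof. unfold inner2; simpl. rewrite inner_0r. Csolve. Qed.

Lemma inner2_fst_0 (u : X2 X) (z : X) : inner2 u (z, hzero X) = hinner X (fst u) z.
Proof. unfold inner2; simpl. rewrite inner_0r. Csolve. Qed.

Lemma inner2_add_r (u a b : X2 X) : inner2 u (add2 a b) = Cadd (inner2 u a) (inner2 u b).
Proof. exact (inner_addr (X2h X) u a b). Qed.

Lemma inner2_sub_l (a b u : X2 X) :
  inner2 (sub2 a b) u = Cadd (inner2 a u) (Cmul Cm1 (inner2 b u)).
Proof. exact (inner_subl (X2h X) a b u). Qed.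

Lemma inner2_sub_r (a b u : X2 X) :
  inner2 u (sub2 a b) = Cadd (inner2 u a) (Cmul Cm1 (inner2 u b)).
Proof. exact (inner_subr (X2h X) a b u). Qed.

Lemma subspace2_add_pair (U : X2 X -> Prop) x f x' g :
  subspace2 U -> U (x, f) -> U (x', g) -> U (hadd X x x', hadd X f g).
Proof. intros (_ & Ha & _) Uf Ug. exact (Ha _ _ Uf Ug). Qed.

Lemma subspace2_fiber0_opp (U : X2 X -> Prop) g :
  subspace2 U -> U (hzero X, g) -> U (hzero X, hopp X g).
Proof.
  intros (_ & _ & Us) Ug. rewrite hopp_scal, <- (hscal_zero X Cm1). exact (Us Cm1 _ Ug).
Qed.

Lemma subspace2_fiber0_hsubsp (U : X2 X -> Prop) :
  subspace2 U -> hsubsp X (image_at U (hzero X)).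
Proof.
  intros (U0 & Ua & Us). split; [|split]; unfold image_at.
  - exact U0.
  - intros u v Uu Uv. rewrite <- (hadd_0 X (hzero X)). exact (Ua _ _ Uu Uv).
  - intros c u Uu. rewrite <- (hscal_zero X c). exact (Us c _ Uu).
Qed.

Lemma closed_subspace2_fiber0_hclosed (U : X2 X -> Prop) :
  closed_subspace2 U -> hclosed X (image_at U (hzero X)).
Proof.
  intros [_ Ucl] u l Hu Hc. apply (Ucl (fun n => (hzero X, u n))); auto.
  intros eps He. destruct (Hc eps He) as [N HN]. exists N. intros n Hn.
  unfold norm2, sub2, inner2; simpl.
  replace (hsub X (hzero X) (hzero X)) with (hzero X) by hmodule X.
  rewrite inner_0l. simpl. rewrite Rplus_0_l. exact (HN n Hn).
Qed.

Lemma adjoint_as_perp (w : X2 X) x f :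
  inner2 w (hopp X f, x) = C0 <-> hinner X (snd w) x = hinner X (fst w) f.
Proof.
  unfold inner2; simpl. rewrite inner_oppr. split; intros E.
  - apply Ceq; [apply (f_equal Re) in E | apply (f_equal Im) in E]; simpl in E; lra.
  - rewrite E. Csolve.
Qed.

(* [S = S^*] is the intersection of the orthogonal complements of the [(-f, x)], [(x, f) \in S]. *)
Lemma selfadjoint_hclosed (S : X2 X -> Prop) : selfadjoint S -> hclosed (X2h X) S.
Proof.
  intros Ssa u l Hu Hc. apply Ssa. intros x f Sxf. apply adjoint_as_perp.
  apply (perp_hclosed (X2h X) (fun v => v = (hopp X f, x)) u l); auto.
  intros n v ->. apply adjoint_as_perp, Ssa; auto.
Qed.

End Relations.

Section Perturbation.
Variable X : Hilbert.
Variables T A S : X2 X -> Prop.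
Hypothesis T_sub : subspace2 T.
Hypothesis A_closed : closed_subspace2 A.
Hypothesis A_herm : hermitian A.
Hypothesis S_sub : subspace2 S.
Hypothesis S_sa : selfadjoint S.
Hypothesis dom_S_A : forall x, dom S x -> dom A x.
Hypothesis T_sum : forall w, T w <-> rel_sum S A w.

Let S0 := image_at S (hzero X).
Let QR := QAs_range A S (dom S).

Lemma S0_iff_perp_dom g : S (hzero X, g) <-> (forall x, dom S x -> hinner X g x = C0).
Proof.
  split.
  - intros Sg x [f Sxf]. exact (eq_trans (proj1 (S_sa _) Sg x f Sxf) (inner_0l X f)).
  - intros Hg. apply S_sa. intros x f Sxf. simpl. rewrite inner_0l. apply Hg. exists f; auto.
Qed.

Lemma S0_of_perp_perp_S0 v : (forall m, perp X S0 m -> hinner X v m = C0) -> S0 v.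
Proof.
  intros Hv. apply S0_iff_perp_dom. intros x Dx. apply Hv. intros m Sm.
  rewrite hinner_conj, (proj1 (S0_iff_perp_dom m) Sm x Dx). Csolve.
Qed.

Lemma A0_sub_S0 g : A (hzero X, g) -> S (hzero X, g).
Proof.
  intros Ag. apply S0_iff_perp_dom. intros x Dx. destruct (dom_S_A x Dx) as [a Axa].
  exact (eq_trans (A_herm _ Ag x a Axa) (inner_0l X a)).
Qed.

Lemma S0_sub_T0 g : S (hzero X, g) -> T (hzero X, g).
Proof.
  intros Sg. apply T_sum. exists g, (hzero X). repeat split; simpl; auto.
  - apply A_closed.
  - symmetry; apply hadd_0.
Qed.

Lemma A_decomp x a : A (x, a) -> dom S x ->
  exists z m, QR z /\ S (hzero X, m) /\ a = hadd X z m.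
Proof.
  intros Axa Dx.
  pose proof (subspace2_fiber0_hsubsp X A (proj1 A_closed)) as A0_sub.
  destruct (proj_exists X _ A0_sub (closed_subspace2_fiber0_hclosed X A A_closed) a)
    as [a0 [Aa0 Oa0]].
  set (f := hsub X a a0).
  assert (Axf : A (x, f)).
  { rewrite <- (hadd_0 X x). unfold f, hsub. apply subspace2_add_pair; auto; [apply A_closed|].
    apply subspace2_fiber0_opp; [apply A_closed | exact Aa0]. }
  destruct (proj_exists X (perp X S0) (perp_hsubsp X S0) (perp_hclosed X S0) f)
    as [z [Pz Oz]].
  exists z, (hadd X (hsub X f z) a0). split; [|split].
  - exists x, f. split; [exact Dx | split; [split; [exact Axf|] | split; [|split; auto]]].
    + intros [v1 v2] [E Av]. simpl in E. subst v1. rewrite inner2_0_snd. apply Oa0, Av.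
    + intros m Am. apply Oa0, Am.
  - rewrite <- (hadd_0 X (hzero X)). apply subspace2_add_pair; auto.
    + apply S0_of_perp_perp_S0, Oz.
    + apply A0_sub_S0, Aa0.
  - unfold f. hmodule X.
Qed.

Lemma T_decomp x t : T (x, t) -> exists s z, S (x, s) /\ QR z /\ t = hadd X s z.
Proof.
  intros Txt. apply T_sum in Txt. destruct Txt as (f & g & Sf & Ag & Et). simpl in *.
  destruct (A_decomp x g Ag (ex_intro _ f Sf)) as (z & m & Qz & Sm & Eg).
  exists (hadd X f m), z. split; [|split]; auto.
  - rewrite <- (hadd_0 X x). apply subspace2_add_pair; auto.
  - rewrite Et, Eg. hmodule X.
Qed.

Lemma S_decomp x s : S (x, s) -> exists t z, T (x, t) /\ QR z /\ s = hsub X t z.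
Proof.
  intros Sxs. destruct (dom_S_A x (ex_intro _ s Sxs)) as [a Axa].
  destruct (A_decomp x a Axa (ex_intro _ s Sxs)) as (z & m & Qz & Sm & Ea).
  exists (hsub X (hadd X s a) m), z. split; [|split]; auto.
  - rewrite <- (hadd_0 X x). unfold hsub at 1. apply subspace2_add_pair; auto.
    + apply T_sum. exists s, a. auto.
    + apply S0_sub_T0, subspace2_fiber0_opp; auto.
  - rewrite Ea. hmodule X.
Qed.

Lemma perp_S_of_perp_T u :
  (forall t, T t -> inner2 u t = C0) -> (forall z, QR z -> hinner X (snd u) z = C0) ->
  forall s, S s -> inner2 u s = C0.
Proof.
  intros OT OQ [x s] Sxs. destruct (S_decomp x s Sxs) as (t & z & Txt & Qz & ->).
  replace (x, hsub X t z) with (add2 (x, t) (hzero X, hopp X z))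
    by (unfold add2; simpl; rewrite hadd_0; reflexivity).
  rewrite inner2_add_r, OT, inner2_0_snd, inner_oppr, OQ by auto. Csolve.
Qed.

Lemma perp_T_of_perp_S u :
  (forall s, S s -> inner2 u s = C0) -> (forall z, QR z -> hinner X (snd u) z = C0) ->
  forall t, T t -> inner2 u t = C0.
Proof.
  intros OS OQ [x t] Txt. destruct (T_decomp x t Txt) as (s & z & Sxs & Qz & ->).
  replace (x, hadd X s z) with (add2 (x, s) (hzero X, z))
    by (unfold add2; simpl; rewrite hadd_0; reflexivity).
  rewrite inner2_add_r, OS, inner2_0_snd, OQ by auto. Csolve.
Qed.

(* [p - q = (w - q) - (w - p)] is orthogonal to [T] and to [S], while [p \in T] and [q \in S]. *)
Lemma proj_eq_of_perp_QR w p q :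
  is_proj2 T w p -> is_proj2 S w q ->
  (forall z, QR z -> hinner X (snd (sub2 w p)) z = C0) ->
  (forall z, QR z -> hinner X (snd (sub2 w q)) z = C0) -> p = q.
Proof.
  intros [Tp OTp] [Sq OSq] Qp Qq.
  assert (Ed : sub2 p q = sub2 (sub2 w q) (sub2 w p)) by hmodule (X2h X).
  assert (OS : forall s, S s -> inner2 (sub2 p q) s = C0).
  { intros s Ss. rewrite Ed, inner2_sub_l, OSq, (perp_S_of_perp_T _ OTp Qp) by auto.
    Csolve. }
  assert (OT : forall t, T t -> inner2 (sub2 p q) t = C0).
  { intros t Tt. rewrite Ed, inner2_sub_l, OTp, (perp_T_of_perp_S _ OSq Qq) by auto.
    Csolve. }
  apply (hsub_eq0 (X2h X)), hinner_def. change (inner2 (sub2 p q) (sub2 p q) = C0).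
  rewrite inner2_sub_r, OT, OS by auto. Csolve.
Qed.

Definition proj_diff_rel (v y : X2 X) : Prop :=
  exists w p q, is_proj2 T w p /\ is_proj2 S w q /\
    v = (snd (sub2 w p), snd (sub2 w q)) /\ y = sub2 p q.

Lemma proj_diff_rel_linear : @linear_rel (X2h X) (X2h X) proj_diff_rel.
Proof.
  intros v y v' y' a (w & p & q & Pp & Pq & -> & ->) (w' & p' & q' & Pp' & Pq' & -> & ->).
  exists (add2 w (scal2 a w')), (add2 p (scal2 a p')), (add2 q (scal2 a q')).
  split; [apply (is_proj_comb (X2h X)); auto|].
  split; [apply (is_proj_comb (X2h X)); auto|].
  split; [simpl; unfold add2, scal2, sub2; simpl; f_equal; hmodule X | hmodule (X2h X)].
Qed.

Lemma finite_rank_perturbation_of_finite_QR : finite_dim X QR -> finite_rank_perturbation T S.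
Proof.
  intros [zs Hzs].
  assert (Hperp : forall u, (forall z, In z zs -> hinner X u z = C0) ->
                            forall z, QR z -> hinner X u z = C0).
  { intros u Hu z Qz. destruct (Hzs z Qz) as [cs ->]. apply inner_lincomb0, Hu. }
  destruct (linear_rel_range_finite_dim (X2h X) (X2h X)
              (map (fun z => (z, hzero X)) zs ++ map (fun z => (hzero X, z)) zs)
              proj_diff_rel proj_diff_rel_linear) as [ys Hys].
  - intros v y (w & p & q & Pp & Pq & -> & ->) He.
    rewrite (proj_eq_of_perp_QR w p q Pp Pq); [hmodule (X2h X) | apply Hperp | apply Hperp];
      intros z Hz.
    + pose proof (He (z, hzero X)) as Hz'. simpl in Hz'. rewrite inner2_fst_0 in Hz'.
      apply Hz', in_or_app. left. apply in_map_iff. eauto.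
    + pose proof (He (hzero X, z)) as Hz'. simpl in Hz'. rewrite inner2_0_snd in Hz'.
      apply Hz', in_or_app. right. apply in_map_iff. eauto.
  - exists ys. intros d (w & p & q & Pp & Pq & ->).
    destruct (Hys (sub2 p q)) as [cs Hcs].
    { exists (snd (sub2 w p), snd (sub2 w q)), w, p, q. auto. }
    exists cs. rewrite lincomb2_X2h. exact Hcs.
Qed.

Lemma T_of_proj_fiber x s f z :
  S (x, s) -> A (x, f) -> is_proj X (perp X S0) f z -> T (x, hadd X s z).
Proof.
  intros Sxs Axf [_ Oz].
  assert (Tsf : T (x, hadd X s f)) by (apply T_sum; exists s, f; auto).
  assert (Tzf : T (hzero X, hsub X z f)).
  { apply S0_sub_T0, S0_of_perp_perp_S0. intros m Hm.
    replace (hsub X z f) with (hscal X Cm1 (hsub X f z)) by hmodule X.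
    rewrite hinner_scal, Oz by auto. Csolve. }
  replace (x, hadd X s z) with (hadd X x (hzero X), hadd X (hadd X s f) (hsub X z f))
    by (f_equal; [apply hadd_0 | hmodule X]).
  apply subspace2_add_pair; auto.
Qed.

Definition QR_rel (d : X2 X) (z : X) : Prop :=
  exists t q, T t /\ S (fst t, hsub X (snd t) z) /\ perp X S0 z /\ is_proj2 S t q /\
    d = sub2 t q.

Lemma QR_rel_linear : @linear_rel (X2h X) X QR_rel.
Proof.
  intros d z d' z' a (t & q & Tt & St & Pz & Pq & ->) (t' & q' & Tt' & St' & Pz' & Pq' & ->).
  exists (add2 t (scal2 a t')), (add2 q (scal2 a q')).
  split; [exact (hsubsp_comb (X2h X) T t t' a T_sub Tt Tt')|].
  split; [|split; [exact (hsubsp_comb X _ z z' a (perp_hsubsp X S0) Pz Pz')|]].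
  - replace (fst (add2 t (scal2 a t')),
             hsub X (snd (add2 t (scal2 a t'))) (hadd X z (hscal X a z')))
      with (add2 (fst t, hsub X (snd t) z) (scal2 a (fst t', hsub X (snd t') z')))
      by (unfold add2, scal2; simpl; f_equal; hmodule X).
    exact (hsubsp_comb (X2h X) S _ _ a S_sub St St').
  - split; [apply (is_proj_comb (X2h X)); auto | hmodule (X2h X)].
Qed.

(* For [z = Q f] and [(x, s) \in S], [t = (x, s + z)] lies in [T], so [t - P_S t] is a value
   of [P_T - P_S]. *)
Lemma QR_sub_QR_rel_range z : QR z -> exists d, QR_rel d z.
Proof.
  intros (x & f & [s Sxs] & [Axf _] & _ & Pz).
  destruct (proj_exists (X2h X) S S_sub (selfadjoint_hclosed X S S_sa) (x, hadd X s z))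
    as [q Pq].
  exists (sub2 (x, hadd X s z) q), (x, hadd X s z), q.
  split; [apply (T_of_proj_fiber x s f z); auto|].
  split; [simpl; replace (hsub X (hadd X s z) z) with s by hmodule X; exact Sxs|].
  split; [apply Pz|]. auto.
Qed.

(* [d = 0] means [t \in S], which forces [z \in S(0) \cap S(0)^\perp]. *)
Lemma finite_QR_of_finite_rank_perturbation : finite_rank_perturbation T S -> finite_dim X QR.
Proof.
  intros [vs Hvs].
  apply (finite_dim_mono X (fun z => exists d, QR_rel d z)); [|exact QR_sub_QR_rel_range].
  apply (linear_rel_range_finite_dim (X2h X) X vs QR_rel QR_rel_linear).
  intros d z (t & q & Tt & St & Pz & [Sq Oq] & ->) Hd.
  assert (Etq : sub2 t q = zero2 X).
  { destruct (Hvs (sub2 t q)) as [cs Hcs].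
    { exists t, t, q. split; [|split; [split|]; auto]. split; auto. intros v _.
      replace (sub2 t t) with (hzero (X2h X)) by hmodule (X2h X). exact (inner_0l (X2h X) v). }
    apply (lincomb_perp_eq0 (X2h X) _ cs vs); [rewrite <- lincomb2_X2h; exact Hcs | exact Hd]. }
  apply (hsub_eq0 (X2h X)) in Etq. subst q.
  assert (S0z : S (hzero X, z)).
  { replace (hzero X, z) with (add2 t (scal2 Cm1 (fst t, hsub X (snd t) z)))
      by (unfold add2, scal2; simpl; f_equal; hmodule X).
    exact (hsubsp_comb (X2h X) S _ _ Cm1 S_sub Sq St). }
  apply hinner_def, Pz, S0z.
Qed.

End Perturbation.

Theorem theorem3p7 (X : Hilbert) (T A S : X2 X -> Prop) :
  closed_subspace2 T -> hermitian T ->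
  closed_subspace2 A -> hermitian A ->
  subspace2 S -> selfadjoint S ->
  (forall x, dom T x <-> dom S x) ->
  (forall x, dom S x -> dom A x) ->
  (forall w, T w <-> rel_sum S A w) ->
  (exists lam, in_resolvent T lam /\ in_resolvent S lam) ->
  (@finite_dim X (@QAs_range X A S (@dom X S)) <-> finite_rank_perturbation T S).
Proof.
  intros [T_sub _] _ A_closed A_herm S_sub S_sa _ dom_S_A T_sum _.
  split.
  - apply (finite_rank_perturbation_of_finite_QR X T A S); auto.
  - apply (finite_QR_of_finite_rank_perturbation X T A S); auto.
Qed.
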